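(* Let $(X,d)$ be a pointed metric space and let $((x_n,y_n))_{n=1}^\infty$ be a sequence in $\widetilde X$ such that $d(x_n,y_n)\to 0$ as $n\to\infty$. Then for every $\varepsilon\in(0,1)$ there exists a subsequence $((x_{n_k},y_{n_k}))_{k=1}^\infty$ which is Lipschitz interpolating for $\mathrm{Lip}_0(X)$ and whose Lipschitz interpolation constant is at most $1/(1-\varepsilon)$.
   Context: All spaces are real. $(X,d)$ has a base point $0$, $\widetilde{X}=\{(x,y)\in X\times X: x\neq y\}$. $\mathrm{Lip}_0(X)$ is the Banach space of Lipschitz $f:X\to\mathbb{R}$ with $f(0)=0$, normed by $\|f\|=\sup_{(x,y)\in\widetilde X}|f(x)-f(y)|/d(x,y)$. A sequence $((u_k,v_k))_{k=1}^\infty$ in $\widetilde X$ is Lipschitz interpolating for $\mathrm{Lip}_0(X)$ if $T:\mathrm{Lip}_0(X)\to\ell_\infty$, $T(f)=\big((f(u_k)-f(v_k))/d(u_k,v_k)\big)_{k}$, is surjective; its Lipschitz interpolation constant is then $\inf\{K\geq 1: \forall\alpha\in\ell_\infty,\ \|\alpha\|_\infty\le 1,\ \exists f\in\mathrm{Lip}_0(X),\ \|f\|\le K,\ T(f)=\alpha\}$. *)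

From Stdlib Require Import Reals.
Open Scope R_scope.

Definition is_metric {X : Type} (d : X -> X -> R) : Prop :=
  (forall x y, 0 <= d x y) /\
  (forall x y, d x y = 0 <-> x = y) /\
  (forall x y, d x y = d y x) /\
  (forall x y z, d x z <= d x y + d y z).

Definition lip0 {X : Type} (d : X -> X -> R) (x0 : X) (f : X -> R) : Prop :=
  f x0 = 0 /\
  exists L : R, forall x y, x <> y -> Rabs (f x - f y) / d x y <= L.

Definition lip_norm_le {X : Type} (d : X -> X -> R) (f : X -> R) (K : R) : Prop :=
  forall x y, x <> y -> Rabs (f x - f y) / d x y <= K.

Definition Tcoord {X : Type} (d : X -> X -> R) (u v : nat -> X) (f : X -> R) (k : nat) : R :=
  (f (u k) - f (v k)) / d (u k) (v k).

Definition bounded_seq (a : nat -> R) : Prop := exists M, forall k, Rabs (a k) <= M.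

Definition lip_interpolating {X : Type} (d : X -> X -> R) (x0 : X) (u v : nat -> X) : Prop :=
  forall alpha : nat -> R, bounded_seq alpha ->
    exists f : X -> R, lip0 d x0 f /\ forall k, Tcoord d u v f k = alpha k.

Definition interp_admissible {X : Type} (d : X -> X -> R) (x0 : X) (u v : nat -> X) (K : R) : Prop :=
  1 <= K /\
  forall alpha : nat -> R, (forall k, Rabs (alpha k) <= 1) ->
    exists f : X -> R, lip0 d x0 f /\ lip_norm_le d f K /\
      forall k, Tcoord d u v f k = alpha k.

Definition is_lip_interp_const {X : Type} (d : X -> X -> R) (x0 : X) (u v : nat -> X) (c : R) : Prop :=
  (forall K, interp_admissible d x0 u v K -> c <= K) /\
  (forall b, (forall K, interp_admissible d x0 u v K -> b <= K) -> b <= c).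

(* Fix the constants L_k = L - (L - 1)/2^k, increasing from 1 to L = 1/(1-eps).
   The subsequence is chosen inductively: when the base point and the first k
   pairs are fixed, with minimal positive mutual distance m, take a later pair
   with (L_{k+1} + 1) d(x_n, y_n) <= (L_{k+1} - L_k) m.  Given alpha with
   |alpha_k| <= 1, an L_k-Lipschitz function on the fixed points then extends to
   the new pair with difference quotient alpha_k and constant L_{k+1}: the pair
   is so short compared with m that the constraints it imposes are compatible.
   The union of these finite graphs is L-Lipschitz, and its McShane extension
   interpolates alpha with norm at most L. *)

From Stdlib Require Import Reals Lra Lia List RList ClassicalEpsilon.
From Coquelicot Require Import Coquelicot.
Open Scope R_scope.

Lemma Glb_Rbar_real (E : R -> Prop) (b s0 : R) :
  (forall s, E s -> b <= s) -> E s0 ->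
  (forall s, E s -> real (Glb_Rbar E) <= s) /\
  (forall c, (forall s, E s -> c <= s) -> c <= real (Glb_Rbar E)).
Proof.
  intros Hb Hs0.
  destruct (Glb_Rbar_correct E) as [Hlb Hgreatest].
  assert (Hle : Rbar_le b (Glb_Rbar E)) by (apply Hgreatest; intros s Hs; apply Hb, Hs).
  pose proof (Hlb s0 Hs0) as Hge.
  destruct (Glb_Rbar E) as [g | |]; simpl in *; try contradiction.
  split.
  - intros s Hs. exact (Hlb s Hs).
  - intros c Hc. apply (Hgreatest (Finite c)). intros s Hs. apply Hc, Hs.
Qed.

Lemma MaxRlist_between {A : Type} (l : list A) (lo hi : A -> R) :
  (forall i j, In i l -> In j l -> lo i <= hi j) ->
  forall i, In i l -> lo i <= MaxRlist (map lo l) <= hi i.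
Proof.
  intros Hlh i Hi. split.
  - apply MaxRlist_P1, in_map, Hi.
  - assert (Hmax : In (MaxRlist (map lo l)) (map lo l)).
    { apply MaxRlist_P2. exists (lo i). apply in_map, Hi. }
    apply in_map_iff in Hmax as [j [<- Hj]].
    apply Hlh; assumption.
Qed.

Section MetricExtension.
Context {X : Type} (d : X -> X -> R).
Hypothesis hd : is_metric d.

Lemma dist_nonneg a b : 0 <= d a b. Proof. apply hd. Qed.
Lemma dist_sym a b : d a b = d b a. Proof. apply hd. Qed.
Lemma dist_triangle a b c : d a c <= d a b + d b c. Proof. apply hd. Qed.
Lemma dist_self a : d a a = 0. Proof. apply hd; reflexivity. Qed.
Lemma dist_eq0 a b : d a b = 0 -> a = b. Proof. apply hd. Qed.

Lemma dist_pos a b : a <> b -> 0 < d a b.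
Proof.
  intros Hab. destruct (Rle_lt_or_eq_dec 0 (d a b) (dist_nonneg a b)) as [Hlt | Heq].
  - exact Hlt.
  - exfalso. apply Hab, dist_eq0. symmetry. exact Heq.
Qed.

Lemma lip_norm_le_intro (F : X -> R) (L : R) :
  (forall a b, F a - F b <= L * d a b) -> lip_norm_le d F L.
Proof.
  intros HF a b Hab. pose proof (dist_pos a b Hab) as Hd.
  apply Rmult_le_reg_r with (d a b); [exact Hd |].
  unfold Rdiv. rewrite Rmult_assoc, Rinv_l, Rmult_1_r by lra.
  pose proof (HF a b). pose proof (HF b a). rewrite (dist_sym b a) in *.
  apply Rabs_le. lra.
Qed.

Definition lip_on (L : R) (w : list (X * R)) : Prop :=
  forall a va b vb, In (a, va) w -> In (b, vb) w -> va - vb <= L * d a b.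

Definition separated (m : R) (l : list X) : Prop :=
  forall a b, In a l -> In b l -> a = b \/ m <= d a b.

Lemma separated_exists (l : list X) : exists m, 0 < m /\ separated m l.
Proof.
  set (pos r := if Rlt_dec 0 r then true else false).
  set (dists := 1 :: filter pos (map (fun ab => d (fst ab) (snd ab)) (list_prod l l))).
  exists (MinRlist dists). split.
  - apply MinRlist_P2. intros r [<- | Hr]; [lra |].
    apply filter_In in Hr as [_ Hr]. unfold pos in Hr.
    destruct (Rlt_dec 0 r); [assumption | discriminate].
  - intros a b Ha Hb.
    destruct (Rle_lt_or_eq_dec 0 (d a b) (dist_nonneg a b)) as [Hlt | Heq].
    + right. apply MinRlist_P1. right. apply filter_In. split.
      * apply (in_map (fun ab => d (fst ab) (snd ab)) _ (a, b)), in_prod; assumption.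
      * unfold pos. destruct (Rlt_dec 0 (d a b)); [reflexivity | contradiction].
    + left. apply dist_eq0. symmetry. exact Heq.
Qed.

(* The slack [(L - L') * m] pays for the short hop from [p] to [p']: either
   [a = b], or [a] and [b] are [m]-apart and hence far from [p] and [p']. *)
Lemma lip_insert_bound L L' m p p' a va b vb :
  0 <= L' <= L -> 1 <= L -> (L + 1) * d p p' <= (L - L') * m ->
  (a = b \/ m <= d a b) -> va - vb <= L' * d a b ->
  va - vb + d p p' <= L * (d p a + d p' b).
Proof.
  intros HL' HL Hclose [<- | Hsep] Hlip.
  - rewrite dist_self, Rmult_0_r in Hlip.
    pose proof (dist_triangle p a p'). rewrite (dist_sym a p') in *.
    pose proof (dist_nonneg p a). pose proof (dist_nonneg p' a).
    assert (1 * (d p a + d p' a) <= L * (d p a + d p' a))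
      by (apply Rmult_le_compat_r; lra).
    lra.
  - pose proof (dist_triangle a p b). pose proof (dist_triangle p p' b).
    rewrite (dist_sym a p) in *.
    assert (Htri : d a b <= (d p a + d p' b) + d p p') by lra.
    assert (L' * d a b <= L' * ((d p a + d p' b) + d p p'))
      by (apply Rmult_le_compat_l; lra).
    assert ((L - L') * m <= (L - L') * ((d p a + d p' b) + d p p'))
      by (apply Rmult_le_compat_l; lra).
    lra.
Qed.

Definition ext_lower (L : R) (c : (X * R) * (X * R)) : R :=
  let '((p, s), (a, va)) := c in va - s - L * d p a.

Definition ext_upper (L : R) (c : (X * R) * (X * R)) : R :=
  let '((p, s), (a, va)) := c in va - s + L * d p a.

(* Each new point [(p, s)] gets the value [t + s] for one common [t]: the largest
   of the lower bounds on [t] imposed by the old points, which also meets all the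
   upper bounds (one-dimensional Helly). *)
Definition ext_value (L : R) (new w : list (X * R)) : R :=
  MaxRlist (map (ext_lower L) (list_prod new w)).

Definition extend (L : R) (new w : list (X * R)) : list (X * R) :=
  map (fun ps => (fst ps, ext_value L new w + snd ps)) new ++ w.

Lemma in_extend L new w b vb :
  In (b, vb) (extend L new w) ->
  (exists s, In (b, s) new /\ vb = ext_value L new w + s) \/ In (b, vb) w.
Proof.
  intros H. apply in_app_iff in H as [H | H]; [left | right; exact H].
  apply in_map_iff in H as [[p s] [Heq Hin]]. injection Heq as <- <-. eauto.
Qed.

Lemma lip_on_extend L L' m new w :
  0 <= L' <= L -> 1 <= L -> separated m (map fst w) -> lip_on L' w ->
  (forall p s p' s', In (p, s) new -> In (p', s') new ->
     s - s' <= d p p' /\ (L + 1) * d p p' <= (L - L') * m) ->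
  lip_on L (extend L new w).
Proof.
  intros HL' HL Hsep Hlip Hnew.
  assert (Hsep' : forall a va b vb, In (a, va) w -> In (b, vb) w -> a = b \/ m <= d a b).
  { intros a va b vb Ha Hb. apply Hsep.
    - apply (in_map fst _ (a, va) Ha).
    - apply (in_map fst _ (b, vb) Hb). }
  set (t := ext_value L new w).
  assert (Hpair : forall i j, In i (list_prod new w) -> In j (list_prod new w) ->
                   ext_lower L i <= ext_upper L j).
  { intros [[q s1] [c vc]] [[q' s2] [e ve]] Hi Hj. simpl.
    apply in_prod_iff in Hi as [Hq Hc]. apply in_prod_iff in Hj as [Hq' He].
    destruct (Hnew q' s2 q s1 Hq' Hq) as [Hs Hclose].
    rewrite (dist_sym q' q) in Hs, Hclose.
    pose proof (lip_insert_bound L L' m q q' c vc e ve HL' HL Hclose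
                  (Hsep' _ _ _ _ Hc He) (Hlip _ _ _ _ Hc He)).
    lra. }
  assert (Ht : forall p s a va, In (p, s) new -> In (a, va) w ->
                 va - s - L * d p a <= t <= va - s + L * d p a).
  { intros p s a va Hp Ha.
    exact (MaxRlist_between _ _ _ Hpair ((p, s), (a, va)) (in_prod _ _ _ _ Hp Ha)). }
  intros a va b vb Ha Hb.
  destruct (in_extend _ _ _ _ _ Ha) as [[s [Has ->]] | Haw];
  destruct (in_extend _ _ _ _ _ Hb) as [[s' [Hbs ->]] | Hbw].
  - destruct (Hnew a s b s' Has Hbs) as [Hs _].
    pose proof (dist_nonneg a b). nra.
  - destruct (Ht a s b vb Has Hbw). fold t. lra.
  - destruct (Ht b s' a va Hbs Haw). rewrite dist_sym. fold t. lra.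
  - pose proof (Hlip _ _ _ _ Haw Hbw).
    pose proof (dist_nonneg a b). nra.
Qed.

Lemma mcshane_extension (L : R) (P : X -> R -> Prop) (a0 : X) (v0 : R) :
  0 <= L -> P a0 v0 ->
  (forall a va b vb, P a va -> P b vb -> va - vb <= L * d a b) ->
  exists F : X -> R,
    (forall a va, P a va -> F a = va) /\ (forall z w, F z - F w <= L * d z w).
Proof.
  intros HL HP0 Hlip.
  set (S z s := exists a va, P a va /\ s = va + L * d z a).
  assert (HS : forall z,
    (forall s, S z s -> real (Glb_Rbar (S z)) <= s) /\
    (forall c, (forall s, S z s -> c <= s) -> c <= real (Glb_Rbar (S z)))).
  { intros z. apply (Glb_Rbar_real _ (v0 - L * d a0 z) (v0 + L * d z a0)).
    - intros s [a [va [Ha ->]]].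
      pose proof (Hlip _ _ _ _ HP0 Ha). pose proof (dist_triangle a0 z a).
      assert (L * d a0 a <= L * (d a0 z + d z a)) by (apply Rmult_le_compat_l; lra).
      lra.
    - exists a0, v0. split; [exact HP0 | reflexivity]. }
  exists (fun z => real (Glb_Rbar (S z))). split.
  - intros a va Ha. destruct (HS a) as [Hlb Hglb]. apply Rle_antisym.
    + replace va with (va + L * d a a) by (rewrite dist_self; ring).
      apply Hlb. exists a, va. split; [exact Ha | reflexivity].
    + apply Hglb. intros s [b [vb [Hb ->]]].
      pose proof (Hlip _ _ _ _ Ha Hb). lra.
  - intros z w. destruct (HS z) as [Hlbz _]. destruct (HS w) as [_ Hglbw].
    enough (real (Glb_Rbar (S z)) - L * d z w <= real (Glb_Rbar (S w))) by lra.
    apply Hglbw. intros s [b [vb [Hb ->]]].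
    assert (real (Glb_Rbar (S z)) <= vb + L * d z b)
      by (apply Hlbz; exists b, vb; split; [exact Hb | reflexivity]).
    pose proof (dist_triangle z w b).
    assert (L * d z b <= L * (d z w + d w b)) by (apply Rmult_le_compat_l; lra).
    lra.
Qed.

End MetricExtension.

Lemma lip_interpolating_of_admissible {X : Type} (d : X -> X -> R) (x0 : X)
    (u v : nat -> X) (K : R) :
  interp_admissible d x0 u v K -> lip_interpolating d x0 u v.
Proof.
  intros [_ Hadm] alpha [M HM].
  set (M' := Rmax M 1).
  assert (HM' : 1 <= M') by apply Rmax_r.
  assert (HMM' : M <= M') by apply Rmax_l.
  destruct (Hadm (fun k => alpha k / M')) as [F [[HF0 [L HL]] [_ HT]]].
  { intros k. unfold Rdiv. rewrite Rabs_mult, Rabs_inv, (Rabs_pos_eq M') by lra.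
    apply Rmult_le_reg_r with M'; [lra |].
    rewrite Rmult_assoc, Rinv_l, Rmult_1_r, Rmult_1_l by lra.
    pose proof (HM k). lra. }
  exists (fun z => M' * F z). split; [split |].
  - rewrite HF0. ring.
  - exists (M' * L). intros a b Hab.
    replace (Rabs (M' * F a - M' * F b) / d a b) with (M' * (Rabs (F a - F b) / d a b))
      by (rewrite <- Rmult_minus_distr_l, Rabs_mult, (Rabs_pos_eq M') by lra;
          unfold Rdiv; ring).
    apply Rmult_le_compat_l; [lra | exact (HL a b Hab)].
  - intros k. unfold Tcoord in *.
    replace ((M' * F (u k) - M' * F (v k)) / d (u k) (v k))
      with (M' * ((F (u k) - F (v k)) / d (u k) (v k))) by (unfold Rdiv; ring).
    rewrite HT. field. lra.
Qed.

Lemma lip_interp_const_exists {X : Type} (d : X -> X -> R) (x0 : X)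
    (u v : nat -> X) (K : R) :
  interp_admissible d x0 u v K ->
  exists c, is_lip_interp_const d x0 u v c /\ c <= K.
Proof.
  intros HK.
  destruct (Glb_Rbar_real (interp_admissible d x0 u v) 1 K (fun _ HK' => proj1 HK') HK)
    as [Hlb Hglb].
  exists (real (Glb_Rbar (interp_admissible d x0 u v))).
  split; [split |]; [exact Hlb | exact Hglb | exact (Hlb K HK)].
Qed.

Section Subsequence.
Variable X : Type.
Variable d : X -> X -> R.
Hypothesis hd : is_metric d.
Variable x0 : X.
Variables x y : nat -> X.
Hypothesis hxy : forall n, x n <> y n.
Hypothesis hlim : Un_cv (fun n => d (x n) (y n)) 0.
Variable eps : R.
Hypothesis heps : 0 < eps < 1.

Definition Lfin : R := 1 / (1 - eps).

Definition Lk (k : nat) : R := Lfin - (Lfin - 1) * (/ 2) ^ k.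

Lemma Lfin_gt1 : 1 < Lfin.
Proof.
  unfold Lfin. apply Rmult_lt_reg_r with (1 - eps); [lra |].
  replace (1 / (1 - eps) * (1 - eps)) with 1 by (field; lra). lra.
Qed.

Lemma Lk_bounds k : 1 <= Lk k <= Lfin.
Proof.
  unfold Lk. pose proof Lfin_gt1. pose proof (pow_lt (/ 2) k ltac:(lra)).
  assert ((/ 2) ^ k <= 1) by (rewrite <- (pow1 k); apply pow_incr; lra).
  split; nra.
Qed.

Lemma Lk_lt_S k : Lk k < Lk (S k).
Proof.
  unfold Lk. simpl. pose proof Lfin_gt1. pose proof (pow_lt (/ 2) k ltac:(lra)). nra.
Qed.

Definition good_index (k : nat) (l : list X) (N n : nat) : Prop :=
  (N < n)%nat /\ exists m, 0 < m /\ separated d m l /\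
    (Lk (S k) + 1) * d (x n) (y n) <= (Lk (S k) - Lk k) * m.

Lemma good_index_exists k l N : exists n, good_index k l N n.
Proof.
  destruct (separated_exists d hd l) as [m [Hm Hsep]].
  pose proof (Lk_lt_S k). pose proof (Lk_bounds (S k)).
  set (eta := (Lk (S k) - Lk k) * m / (Lk (S k) + 1)).
  assert (Heta : 0 < eta).
  { apply Rdiv_lt_0_compat; [apply Rmult_lt_0_compat |]; lra. }
  destruct (hlim eta Heta) as [N0 HN0].
  set (n := Nat.max N0 (S N)).
  specialize (HN0 n ltac:(lia)). unfold R_dist in HN0.
  rewrite Rminus_0_r, Rabs_pos_eq in HN0 by apply (dist_nonneg d hd).
  exists n. split; [lia |]. exists m. split; [exact Hm | split; [exact Hsep |]].
  apply Rmult_lt_compat_l with (r := Lk (S k) + 1) in HN0; [| lra].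
  unfold eta in HN0.
  replace ((Lk (S k) + 1) * ((Lk (S k) - Lk k) * m / (Lk (S k) + 1)))
    with ((Lk (S k) - Lk k) * m) in HN0 by (field; lra).
  lra.
Qed.

Definition next_index (k : nat) (l : list X) (N : nat) : nat :=
  proj1_sig (constructive_indefinite_description _ (good_index_exists k l N)).

(* After [k] steps: the points fixed so far, and the last index used. *)
Fixpoint chosen (k : nat) : list X * nat :=
  match k with
  | O => (x0 :: nil, O)
  | S k => let n := next_index k (fst (chosen k)) (snd (chosen k)) in
           (x n :: y n :: fst (chosen k), n)
  end.

Definition nk (k : nat) : nat := snd (chosen (S k)).

Lemma nk_good k : good_index k (fst (chosen k)) (snd (chosen k)) (nk k).
Proof. exact (proj2_sig (constructive_indefinite_description _ (good_index_exists _ _ _))). Qed.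

Lemma nk_increasing k : (nk k < nk (S k))%nat.
Proof. exact (proj1 (nk_good (S k))). Qed.

Section Interpolant.
Variable alpha : nat -> R.
Hypothesis halpha : forall k, Rabs (alpha k) <= 1.

Fixpoint partial_graph (k : nat) : list (X * R) :=
  match k with
  | O => (x0, 0) :: nil
  | S k => let p := x (nk k) in let q := y (nk k) in
           extend d (Lk (S k)) ((p, 0) :: (q, - (alpha k * d p q)) :: nil) (partial_graph k)
  end.

Lemma partial_graph_points k : map fst (partial_graph k) = fst (chosen k).
Proof.
  induction k as [| k IH]; [reflexivity |].
  simpl partial_graph. unfold extend. rewrite map_app, IH. reflexivity.
Qed.

Lemma partial_graph_lip k : lip_on d (Lk k) (partial_graph k).
Proof.
  induction k as [| k IH].
  - intros a va b vb [Ha | []] [Hb | []].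
    injection Ha as <- <-. injection Hb as <- <-.
    rewrite (dist_self d hd). lra.
  - destruct (nk_good k) as [_ [m [Hm [Hsep Hclose]]]].
    pose proof (Lk_bounds k). pose proof (Lk_bounds (S k)). pose proof (Lk_lt_S k).
    apply (lip_on_extend d hd _ (Lk k) m);
      [lra | lra | now rewrite partial_graph_points | exact IH |].
    set (p := x (nk k)) in *. set (q := y (nk k)) in *.
    assert (Halpha : -1 <= alpha k <= 1).
    { pose proof (halpha k). pose proof (Rle_abs (alpha k)).
      pose proof (Rle_abs (- alpha k)). rewrite Rabs_Ropp in *. lra. }
    assert (Hpq : - d p q <= alpha k * d p q <= d p q).
    { pose proof (dist_nonneg d hd p q). split; nra. }
    assert (0 < (Lk (S k) - Lk k) * m) by (apply Rmult_lt_0_compat; lra).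
    intros a s b s' [Ha | [Ha | []]] [Hb | [Hb | []]];
      injection Ha as <- <-; injection Hb as <- <-;
      rewrite ?(dist_self d hd), ?(dist_sym d hd q p); split; lra.
Qed.

Lemma partial_graph_mono k j e :
  (k <= j)%nat -> In e (partial_graph k) -> In e (partial_graph j).
Proof.
  induction 1 as [| j _ IH]; [tauto |].
  intros He. apply in_or_app. right. exact (IH He).
Qed.

Lemma partial_graph_lip_Lfin k j a va b vb :
  In (a, va) (partial_graph k) -> In (b, vb) (partial_graph j) -> va - vb <= Lfin * d a b.
Proof.
  intros Ha Hb.
  pose proof (partial_graph_lip (Nat.max k j) a va b vb
    (partial_graph_mono k _ _ (Nat.le_max_l k j) Ha)
    (partial_graph_mono j _ _ (Nat.le_max_r k j) Hb)).
  pose proof (Lk_bounds (Nat.max k j)). pose proof (dist_nonneg d hd a b). nra.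
Qed.

Lemma partial_graph_new_pair k : exists t,
  In (x (nk k), t + 0) (partial_graph (S k)) /\
  In (y (nk k), t + - (alpha k * d (x (nk k)) (y (nk k)))) (partial_graph (S k)).
Proof. eexists. split; [left | right; left]; reflexivity. Qed.

End Interpolant.

Lemma admissible_Lfin :
  interp_admissible d x0 (fun k => x (nk k)) (fun k => y (nk k)) Lfin.
Proof.
  pose proof Lfin_gt1. split; [lra |]. intros alpha halpha.
  destruct (mcshane_extension d hd Lfin
              (fun a va => exists k, In (a, va) (partial_graph alpha k)) x0 0)
    as [F [HFext HFlip]].
  { lra. }
  { exists O. left. reflexivity. }
  { intros a va b vb [k Ha] [j Hb].
    exact (partial_graph_lip_Lfin alpha halpha k j a va b vb Ha Hb). }
  exists F. pose proof (lip_norm_le_intro d hd F Lfin HFlip) as Hnorm.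
  split; [split | split; [exact Hnorm |]].
  - apply HFext. exists O. left. reflexivity.
  - exists Lfin. exact Hnorm.
  - intros k. unfold Tcoord.
    destruct (partial_graph_new_pair alpha k) as [t [Hp Hq]].
    rewrite (HFext _ _ (ex_intro _ (S k) Hp)), (HFext _ _ (ex_intro _ (S k) Hq)).
    pose proof (dist_pos d hd _ _ (hxy (nk k))). field. lra.
Qed.

End Subsequence.

Theorem theorem4p4 (X : Type) (d : X -> X -> R) (x0 : X)
    (hd : is_metric d) (x y : nat -> X)
    (hxy : forall n, x n <> y n)
    (hlim : Un_cv (fun n => d (x n) (y n)) 0)
    (eps : R) (heps : 0 < eps < 1) :
  exists nk : nat -> nat,
    (forall k, (nk k < nk (S k))%nat) /\
    lip_interpolating d x0 (fun k => x (nk k)) (fun k => y (nk k)) /\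
    exists c : R,
      is_lip_interp_const d x0 (fun k => x (nk k)) (fun k => y (nk k)) c /\
      c <= 1 / (1 - eps).
Proof.
  pose proof (admissible_Lfin X d hd x0 x y hxy hlim eps heps) as Hadm.
  exists (nk X d hd x0 x y hlim eps heps). split; [| split].
  - apply nk_increasing.
  - exact (lip_interpolating_of_admissible _ _ _ _ _ Hadm).
  - exact (lip_interp_const_exists _ _ _ _ _ Hadm).
Qed.
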